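(* For all integers $n \ge 0$ and $k \ge 0$, the word $W_n$ occurs exactly $3^k$ times as a (contiguous) subword of $W_{n+k}$. Equivalently, writing $W_{n+k}$ as the concatenation of $3^k$ copies of $W_n$ with a single letter $1$ inserted between some consecutive copies (as results from iterating $W_{m+1}=W_mW_m1W_m$), the only occurrences of $W_n$ in $W_{n+k}$ are these $3^k$ copies.
   Context: Words are finite strings over the alphabet $\{0,1\}$. Define $W_0 = 0$ and $W_{m+1} = W_m W_m 1 W_m$ (concatenation) for $m\ge 0$. An occurrence of a word $u$ in a word $v$ is a position at which $u$ appears as a contiguous block of $v$. *)

(* Words over {0,1} are encoded as seq bool: 0 = false, 1 = true. *)
From mathcomp Require Import all_boot.
Set Implicit Arguments. Unset Strict Implicit. Unset Printing Implicit Defensive.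

Fixpoint W (m : nat) : seq bool :=
  match m with
  | 0 => [:: false]
  | m'.+1 => W m' ++ W m' ++ [:: true] ++ W m'
  end.

Definition occurs_at (u v : seq bool) (i : nat) : bool :=
  (i + size u <= size v) && (take (size u) (drop i v) == u).

Definition num_occ (u v : seq bool) : nat :=
  count (occurs_at u v) (iota 0 (size v).+1).

From mathcomp Require Import all_boot.
From mathcomp Require Import zify.

(* The substitution [Wsubst n] (0 |-> W_n, 1 |-> 1) satisfies
   W_(n+k) = Wsubst n (W_k) and W_k has 3^k zeros, so it suffices that the
   occurrences of W_n in Wsubst n w are exactly the images of the zeros of w.  That is a
   synchronisation property: W_n never starts strictly inside a W_n block.
   Writing W_(n+1) = Wsubst n (W_1), a position strictly inside W_(n+1) is
   either strictly inside a W_n block (excluded by induction) or a block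
   boundary; at a boundary, injectivity of [Wsubst n] on prefixes reduces the
   question to the finite check for W_1 = 0010. *)

Fixpoint Wsubst (n : nat) (w : seq bool) : seq bool :=
  if w is b :: w' then (if b then [:: true] else W n) ++ Wsubst n w' else [::].

Lemma W_cons n : exists r, W n = false :: r.
Proof.
elim: n => [|n [r IHn]]; first by exists [::].
by exists (r ++ W n ++ true :: W n); rewrite /= IHn.
Qed.

Lemma Wsubst_cat n u v : Wsubst n (u ++ v) = Wsubst n u ++ Wsubst n v.
Proof. by elim: u => [|b u IHu] //=; rewrite IHu catA. Qed.

Lemma W_S n : W n.+1 = Wsubst n (W 1).
Proof. by rewrite /= cats0. Qed.

Lemma Wsubst_S n w : Wsubst n.+1 w = Wsubst n (Wsubst 1 w).
Proof.
elim: w => [|[] w IHw] //=; first by rewrite IHw.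
by rewrite IHw -!catA.
Qed.

Lemma W_addn n k : W (n + k) = Wsubst n (W k).
Proof.
elim: k => [|k IHk]; first by rewrite addn0 /= cats0.
by rewrite addnS /= IHk !Wsubst_cat.
Qed.

Lemma count_negb_W k : count negb (W k) = 3 ^ k.
Proof. by elim: k => [|k IHk] //=; rewrite !count_cat /= IHk expnS; lia. Qed.

Lemma prefix_Wsubst n u v : prefix (Wsubst n u) (Wsubst n v) -> prefix u v.
Proof.
have [r Wr] := W_cons n.
elim: u v => [|a u IHu] [|b v] //=; first by case: a; rewrite //= Wr.
case: a; case: b => //=; rewrite ?Wr //; first exact: IHu.
by rewrite prefix_catr // eqxx => /IHu.
Qed.

Lemma drop_Wsubst n x y i : 0 < i < size (Wsubst n x) ->
  (exists2 j, 0 < j < size x &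
     drop i (Wsubst n (x ++ y)) = Wsubst n (drop j x ++ y))
  \/ (exists k j, 0 < k < size (W n) /\
     drop i (Wsubst n (x ++ y)) = drop k (W n) ++ Wsubst n (drop j x ++ y)).
Proof.
elim: x i => [|a x IHx] i /=; first by rewrite ltn0 andbF.
rewrite size_cat drop_cat; set blk := (if a then _ else _) => Hi.
have [ltim | gtim | eqi] := ltngtP i (size blk).
- right; exists i, 1; rewrite /= drop0.
  by case: a @blk Hi ltim => /= Hi ltim; [lia | split => //; lia].
- have Hi' : 0 < i - size blk < size (Wsubst n x) by lia.
  have [[j Hj ->] | [k [j [Hk ->]]]] := IHx _ Hi'.
  + by left; exists j.+1 => //; lia.
  + by right; exists k, j.+1.
- left; exists 1; last by rewrite eqi subnn /= !drop0.
  by case: x {IHx} Hi => //=; lia.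
Qed.

Lemma W1_shift_nprefix i t : 0 < i < 4 ->
  ~~ prefix (W 1) (drop i (W 1) ++ Wsubst 1 t).
Proof. by case: i => [|[|[|[|]]]] //; case: t => [|[] t]. Qed.

Lemma W_shift_nprefix n i t : 0 < i < size (W n) ->
  ~~ prefix (W n) (drop i (W n) ++ Wsubst n t).
Proof.
elim: n i t => [|n IHn] i t Hi; first by case: i Hi => [|[]].
have Hi' : 0 < i < size (Wsubst n (W 1)) by rewrite -W_S.
have -> : drop i (W n.+1) ++ Wsubst n.+1 t =
          drop i (Wsubst n (W 1 ++ Wsubst 1 t)).
  by rewrite Wsubst_S Wsubst_cat -W_S drop_cat; case/andP: Hi => _ ->.
apply/negP; have [[j Hj ->] | [k [j [Hk ->]]]] := drop_Wsubst _ _ (Wsubst 1 t) _ Hi'.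
- by rewrite W_S => /prefix_Wsubst; apply/negP/W1_shift_nprefix.
- have Wn_pre : prefix (W n) (W n.+1) by rewrite prefix_prefix.
  by move=> /(prefix_trans Wn_pre); apply/negP/IHn.
Qed.

Lemma occurs_at0 u v : occurs_at u v 0 = prefix u v.
Proof.
rewrite /occurs_at prefixE drop0; case: eqP => [<-|]; last by rewrite andbF.
by rewrite size_take_min geq_minr.
Qed.

Lemma occurs_at_prefix u v i : occurs_at u v i -> prefix u (drop i v).
Proof. by rewrite prefixE => /andP[]. Qed.

Lemma count_occurs_at_cons u a v n :
  count (occurs_at u (a :: v)) (iota 0 n.+1)
  = occurs_at u (a :: v) 0 + count (occurs_at u v) (iota 0 n).
Proof.
rewrite -[iota 0 n.+1]/(0 :: iota (1 + 0) n) iotaDl /= count_map.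
by congr (_ + _); apply: eq_count => i; rewrite /= add1n.
Qed.

Lemma num_occ_cons u a v :
  num_occ u (a :: v) = occurs_at u (a :: v) 0 + num_occ u v.
Proof. exact: count_occurs_at_cons. Qed.

Lemma num_occ_cat u x y :
  num_occ u (x ++ y) = count (occurs_at u (x ++ y)) (iota 0 (size x)) + num_occ u y.
Proof.
elim: x => [|a x IHx] //.
by rewrite cat_cons num_occ_cons IHx [size (_ :: _)]/= count_occurs_at_cons addnA.
Qed.

Lemma count_occurs_at_W n t :
  count (occurs_at (W n) (W n ++ Wsubst n t)) (iota 0 (size (W n))) = 1.
Proof.
have [r Wr] := W_cons n.
rewrite [in iota _ _]Wr [iota _ _]/= /= occurs_at0 prefix_prefix.
apply/eqP; rewrite eqSS eqn0Ngt -has_count; apply/hasPn => i.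
rewrite mem_iota => Hi; apply/negP => /occurs_at_prefix.
have lt_i_W : 0 < i < size (W n) by rewrite Wr /=; lia.
by rewrite drop_cat (_ : i < _); [apply/negP/W_shift_nprefix | case/andP: lt_i_W].
Qed.

Lemma num_occ_W_Wsubst n w : num_occ (W n) (Wsubst n w) = count negb w.
Proof.
have [r Wr] := W_cons n.
elim: w => [|[] w IHw] /=; first by rewrite /num_occ /= occurs_at0 Wr.
  by rewrite num_occ_cons occurs_at0 IHw Wr.
by rewrite num_occ_cat count_occurs_at_W IHw.
Qed.

Theorem lemma1 (n k : nat) : num_occ (W n) (W (n + k)) = 3 ^ k.
Proof. by rewrite W_addn num_occ_W_Wsubst count_negb_W. Qed.
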